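(* Let $\pi\in S_n$ be shallow. Then: (1) there are no indices $r<i<j<s$ with $\pi_i=n$, $\pi_j=1$ and $\pi_r>\pi_s$ (i.e. $\pi$ avoids the mesh pattern $3\mathbf{4}\mathbf{1}2$, an occurrence of $3412$ whose ''4'' is the entry $n$ and whose ''1'' is the entry $1$); and (2) there are no indices $1<i<j<n$ with $\pi_i>\pi_1>\pi_n>\pi_j$ (i.e. $\pi$ avoids the pattern $\underline{3}41\underline{2}$, an occurrence of $3412$ whose ''3'' is in position $1$ and whose ''2'' is in position $n$).
   Context: For $\pi\in S_n$: $D(\pi)=\sum_{i}|\pi_i-i|$, $I(\pi)$ is the number of inversions, $T(\pi)=n-\mathrm{cyc}(\pi)$ with $\mathrm{cyc}$ the number of cycles in the disjoint cycle decomposition; $\pi$ is shallow if $I(\pi)+T(\pi)=D(\pi)$. *)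

From mathcomp Require Import all_boot all_fingroup.
Set Implicit Arguments. Unset Strict Implicit. Unset Printing Implicit Defensive.

(* Permutations of {1..n} are modelled as s : 'S_n = {perm 'I_n}, with
   positions and values shifted down by one (0-indexed): pi_i = s (i-1) + 1. *)

Definition absdiff (a b : nat) : nat := (a - b) + (b - a).

Definition displ n (s : 'S_n) : nat := \sum_(i < n) absdiff (s i) i.

Definition inv_count n (s : 'S_n) : nat :=
  #|[set p : 'I_n * 'I_n | (p.1 < p.2) && (s p.2 < s p.1)]|.

Definition ncycles n (s : 'S_n) : nat := #|porbits s|.

Definition tcost n (s : 'S_n) : nat := n - ncycles s.

Definition shallow n (s : 'S_n) : Prop := inv_count s + tcost s = displ s.

From mathcomp Require Import all_boot all_fingroup zify.
Set Implicit Arguments. Unset Strict Implicit. Unset Printing Implicit Defensive.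

(* Let d(pi) = D(pi) - I(pi) - T(pi).  Deleting the largest entry of pi in S_(n+1)
   and moving the last entry v into its position m gives pi' in S_n with
     d(pi) = d(pi') + 2 min(A, B),
   where A counts the entries before position m that exceed v and B the entries
   strictly between m and the end that are below v.  By induction d >= 0, so a
   shallow pi has a shallow pi' and A = 0 or B = 0.  Both patterns are relaxed so
   as to survive this step: in (1) the "4" need only be a left-to-right maximum,
   in (2) the "2" only a right-to-left minimum.  A case analysis on m shows that
   an occurrence in pi yields one in pi' unless A and B are both positive, so by
   induction shallow permutations avoid the relaxed patterns. *)

(* [pval s] is [s] read as a function on nat (the junk value 0 beyond [n]). *)
Definition pval n (s : 'S_n) (k : nat) : nat :=
  if insub k is Some i then nat_of_ord (s i) else 0.

Definition inversions n (f : nat -> nat) : nat :=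
  \sum_(i < n) \sum_(j < n) ((i < j) && (f j < f i) : nat).

Definition inversions_at n (f : nat -> nat) (q : nat) : nat :=
  \sum_(k < n) ((k < q) && (f q < f k) : nat) +
  \sum_(k < n) ((q < k) && (f k < f q) : nat).

Lemma count_ord_gt n x : \sum_(k < n) (x < k : nat) = n - x.+1.
Proof.
elim: n => [|n IH]; first by rewrite big_ord0.
by rewrite big_ord_recr /= IH; case: ltnP; lia.
Qed.

Lemma count_ord_lt n x : \sum_(k < n) (k < x : nat) = minn x n.
Proof.
elim: n => [|n IH]; first by rewrite big_ord0 minn0.
by rewrite big_ord_recr /= IH; case: ltnP; lia.
Qed.

Lemma sum_bool_eq0 n (P : nat -> bool) :
  \sum_(k < n) (P k : nat) = 0 -> forall k, k < n -> ~~ P k.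
Proof.
move=> /eqP; rewrite sum_nat_eq0 => /forallP P0 k kn.
by move: (P0 (Ordinal kn)); case: (P k).
Qed.

Section PermAsFunction.
Variables (n : nat) (s : 'S_n).

Lemma pvalE (i : 'I_n) : pval s i = s i.
Proof. by rewrite /pval valK. Qed.

Lemma pval_lt k : k < n -> pval s k < n.
Proof. by move=> kn; rewrite -[k]/(nat_of_ord (Ordinal kn)) pvalE. Qed.

Lemma pval_inj k l : k < n -> l < n -> pval s k = pval s l -> k = l.
Proof.
move=> kn ln; rewrite -[k]/(nat_of_ord (Ordinal kn)) -[l]/(nat_of_ord (Ordinal ln)).
by rewrite !pvalE => /val_inj/perm_inj ->.
Qed.

Lemma sum_pval (F : nat -> nat) : \sum_(k < n) F (pval s k) = \sum_(k < n) F k.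
Proof.
rewrite (eq_bigr (fun k => F (s k))) => [|k _]; last by rewrite pvalE.
by rewrite [RHS](reindex_inj (@perm_inj _ s)).
Qed.

Lemma displE : displ s = \sum_(k < n) absdiff (pval s k) k.
Proof. by apply: eq_bigr => k _; rewrite pvalE. Qed.

Lemma inv_countE : inv_count s = inversions n (pval s).
Proof.
rewrite /inv_count /inversions cardsE -sum1_card big_mkcond /= pair_big /=.
by apply: eq_bigr => p _; rewrite unfold_in !pvalE; case: ifP.
Qed.

End PermAsFunction.

Lemma eq_inversions n (f g : nat -> nat) :
  (forall k, k < n -> f k = g k) -> inversions n f = inversions n g.
Proof. by move=> fg; apply: eq_bigr => i _; apply: eq_bigr => j _; rewrite !fg. Qed.

Lemma inversionsS n (f : nat -> nat) :
  inversions n.+1 f = inversions n f + \sum_(k < n) (f n < f k : nat).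
Proof.
rewrite /inversions big_ord_recr /= [X in _ + X]big1 => [|j _]; last first.
  by rewrite ltnNge -ltnS ltn_ord.
by rewrite addn0 -big_split; apply: eq_bigr => i _; rewrite big_ord_recr /= ltn_ord.
Qed.

Lemma big_pair_D1 n (H : 'I_n -> 'I_n -> nat) (q : 'I_n) :
  \sum_(i < n) \sum_(j < n) H i j + H q q =
  \sum_(j < n) H q j + \sum_(i < n) H i q +
  \sum_(i < n | i != q) \sum_(j < n | j != q) H i j.
Proof.
rewrite (bigD1 q) //= [\sum_(i < n) H i q](bigD1 q) //=.
have -> : \sum_(i < n | i != q) \sum_(j < n) H i j =
    \sum_(i < n | i != q) H i q + \sum_(i < n | i != q) \sum_(j < n | j != q) H i j.
  by rewrite -big_split; apply: eq_bigr => i _; rewrite (bigD1 q).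
set X := \sum_(i < n | i != q) H i q.
set Y := \sum_(i < n | i != q) \sum_(j < n | j != q) H i j.
lia.
Qed.

Lemma inversions_D1 n (f : nat -> nat) (q : 'I_n) :
  inversions n f =
  \sum_(i < n | i != q) \sum_(j < n | j != q) ((i < j) && (f j < f i) : nat)
  + inversions_at n f q.
Proof.
have := big_pair_D1 (fun i j : 'I_n => ((i < j) && (f j < f i) : nat)) q.
by rewrite /inversions /inversions_at /= ltnn; lia.
Qed.

Lemma inversions_update n (f g : nat -> nat) (q : 'I_n) :
  (forall k : 'I_n, k != q -> f k = g k) ->
  inversions n f + inversions_at n g q = inversions n g + inversions_at n f q.
Proof.
move=> fg; rewrite !(inversions_D1 _ q) addnAC.
rewrite (eq_bigr (fun i : 'I_n => \sum_(j < n | j != q) ((i < j) && (g j < g i) : nat))) //.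
by move=> i iq; apply: eq_bigr => j jq; rewrite !fg.
Qed.

Lemma sum_update n (F G : 'I_n -> nat) (q : 'I_n) :
  (forall k, k != q -> F k = G k) ->
  \sum_(k < n) F k + G q = \sum_(k < n) G k + F q.
Proof.
move=> FG; rewrite (bigD1 q) //= [in RHS](bigD1 q) //= (eq_bigr G FG).
by rewrite addnAC [RHS]addnC addnA.
Qed.

Lemma lift_permX n (i : 'I_n.+1) (u : 'S_n) k x :
  (lift_perm i i u ^+ k)%g (lift i x) = lift i ((u ^+ k)%g x).
Proof.
elim: k => [|k IH]; first by rewrite !expg0 !perm1.
by rewrite !expgSr !permM IH lift_perm_lift.
Qed.

Lemma lift_permX_id n (i : 'I_n.+1) (u : 'S_n) k : (lift_perm i i u ^+ k)%g i = i.
Proof.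
elim: k => [|k IH]; first by rewrite expg0 perm1.
by rewrite expgSr permM IH lift_perm_id.
Qed.

Lemma porbit_lift_perm n (i : 'I_n.+1) (u : 'S_n) x :
  porbit (lift_perm i i u) (lift i x) = lift i @: porbit u x.
Proof.
apply/setP => y; apply/porbitP/imsetP => [[k ->]|[z /porbitP [k ->] ->]].
  by exists ((u ^+ k)%g x); rewrite ?lift_permX ?mem_porbit.
by exists k; rewrite lift_permX.
Qed.

Lemma porbit_lift_perm_id n (i : 'I_n.+1) (u : 'S_n) :
  porbit (lift_perm i i u) i = [set i].
Proof.
apply/setP => y; rewrite inE; apply/porbitP/eqP => [[k ->]|->].
  by rewrite lift_permX_id.
by exists 0; rewrite expg0 perm1.
Qed.

Lemma ncycles_lift_perm n (i : 'I_n.+1) (u : 'S_n) :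
  ncycles (lift_perm i i u) = ncycles u + 1.
Proof.
pose liftS (A : {set 'I_n}) := lift i @: A.
rewrite /ncycles.
have -> : porbits (lift_perm i i u) = [set i] |: (liftS @: porbits u).
  apply/setP => B; rewrite !inE; apply/imsetP/idP.
    move=> [x _ ->]; case: (unliftP i x) => [j|] ->.
      by rewrite porbit_lift_perm imset_f ?orbT // imset_f.
    by rewrite porbit_lift_perm_id eqxx.
  case/orP => [/eqP ->|/imsetP [A /imsetP [x _ ->] ->]].
    by exists i; rewrite ?porbit_lift_perm_id.
  by exists (lift i x); rewrite ?porbit_lift_perm.
rewrite cardsU1 card_imset; last exact: imset_inj (@lift_inj _ i).
suff -> : [set i] \notin liftS @: porbits u by rewrite addnC.
apply/imsetP => [[A /imsetP [x _ ->] E]].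
have : i \in [set i] by rewrite inE.
by rewrite E => /imsetP [z _ /eqP]; rewrite (negbTE (neq_lift _ _)).
Qed.

Lemma ncycles_le n (u : 'S_n) : ncycles u <= n.
Proof. by apply: leq_trans (leq_imset_card _ _) _; rewrite card_ord. Qed.

Definition lr_max (f : nat -> nat) (i : nat) : Prop := forall k, k < i -> f k < f i.

Definition rl_min n (f : nat -> nat) (q : nat) : Prop := forall k, q < k < n -> f q < f k.

Definition has_3412_lrmax_min n (f : nat -> nat) : Prop := exists r i j t,
  [/\ r < i < j, j < t < n, lr_max f i, f j = 0 & f t < f r].

Definition has_3412_first_rlmin n (f : nat -> nat) : Prop := exists i j q,
  [/\ 0 < i < j, j < q < n, f q < f 0 < f i, f j < f q & rl_min n f q].

Section Shrink.
Variables (n : nat) (s : 'S_n.+1).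

(* [m] is the position of the largest value [n] of [s] and [v] its last value;
   [shrink] replaces [n] by [v] and drops the last position. *)
Local Notation m := (nat_of_ord ((s^-1)%g ord_max)).
Local Notation v := (pval s n).

Definition swap_max : 'S_n.+1 := (tperm ((s^-1)%g ord_max) ord_max * s)%g.

Lemma swap_max_max : swap_max ord_max = ord_max.
Proof. by rewrite permM tpermR permKV. Qed.

Definition shrink_fun (i : 'I_n) : 'I_n :=
  odflt i (unlift ord_max (swap_max (lift ord_max i))).

Lemma lift_shrink_fun i : lift ord_max (shrink_fun i) = swap_max (lift ord_max i).
Proof.
rewrite /shrink_fun; case: unliftP => [j -> //|].
rewrite -{2}swap_max_max => /perm_inj/eqP.
by rewrite eq_sym (negbTE (neq_lift _ _)).
Qed.

Lemma shrink_fun_inj : injective shrink_fun.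
Proof. by move=> i j /(congr1 (lift ord_max)); rewrite !lift_shrink_fun => /perm_inj/lift_inj. Qed.

Definition shrink : 'S_n := perm shrink_fun_inj.

Lemma swap_maxE : swap_max = lift_perm ord_max ord_max shrink.
Proof.
apply/permP => x; case: (unliftP ord_max x) => [j|] ->.
  by rewrite lift_perm_lift -lift_shrink_fun permE.
by rewrite lift_perm_id swap_max_max.
Qed.

Lemma ncycles_shrink : ncycles shrink + 1 = ncycles s + (m != n).
Proof.
have -> : (m != n) = ((s^-1)%g ord_max != ord_max) by [].
rewrite -(ncycles_lift_perm ord_max) -swap_maxE /ncycles /swap_max -porbits_mul_tperm.
suff -> : (s^-1)%g ord_max \in porbit s ord_max by rewrite addn0.
by rewrite porbit_sym -{1}(permKV s ord_max) -{1}[s]expg1 mem_porbit.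
Qed.

Lemma pval_pos_max : pval s m = n.
Proof. by rewrite pvalE permKV. Qed.

Lemma pval_shrink k : k < n -> pval shrink k = if k == m then v else pval s k.
Proof.
move=> kn; pose k' := Ordinal kn.
have lkE : nat_of_ord k' = lift ord_max k' by rewrite lift_max.
rewrite -[k]/(nat_of_ord k') (pvalE shrink k') -[in LHS]lift_max permE.
rewrite lift_shrink_fun permM -[n]/(nat_of_ord (@ord_max n)) (pvalE s ord_max).
rewrite [X in pval s X]lkE pvalE.
case: eqP => [km|km].
  by rewrite (_ : lift ord_max k' = (s^-1)%g ord_max) ?tpermL //; apply: ord_inj; rewrite -lkE.
rewrite tpermD ?neq_lift //.
by apply/eqP => /(congr1 (@nat_of_ord _)) E; apply: km; rewrite lkE E.
Qed.

Lemma pval_le k : k <= n -> pval s k <= n.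
Proof. by move=> kn; rewrite -ltnS pval_lt. Qed.

Lemma pos_max_le : m <= n.
Proof. by rewrite -ltnS. Qed.

Lemma pos_max_last : n <= m -> m = n.
Proof. by move=> nm; apply/eqP; rewrite eqn_leq pos_max_le nm. Qed.

Lemma pval_last_max : n <= m -> v = n.
Proof. by move=> /pos_max_last mn; rewrite -[X in pval s X]mn pval_pos_max. Qed.

Lemma pval_neq_last (k : 'I_n) : pval s k != v.
Proof.
apply/eqP => /(pval_inj (leqW (ltn_ord k)) (ltnSn n)) kn.
by move: (ltn_ord k); rewrite kn ltnn.
Qed.

Lemma pval_neq_pos_max k : k <= n -> k != m -> pval s k < n.
Proof.
move=> kn km; rewrite ltn_neqAle pval_le // andbT; apply: contra km => /eqP fk.
by apply/eqP/(@pval_inj _ s k m) => //; rewrite fk pval_pos_max.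
Qed.

Lemma pval_shrink_other k : k < n -> k != m -> pval shrink k = pval s k.
Proof. by move=> kn km; rewrite pval_shrink // (negbTE km). Qed.

Lemma pval_shrink_pos_max : m < n -> pval shrink m = v.
Proof. by move=> mn; rewrite pval_shrink // eqxx. Qed.

Definition left_inv : nat := \sum_(k < n) ((k < m) && (v < pval s k) : nat).
Definition right_inv : nat := \sum_(k < n) ((m < k) && (pval s k < v) : nat).

Lemma left_inv_eq0 : left_inv = 0 -> forall k, k < m -> pval s k < v.
Proof.
move=> /(@sum_bool_eq0 n (fun k => (k < m) && (v < pval s k))) A0 k km.
have := A0 k (leq_trans km pos_max_le).
rewrite km /= -leqNgt leq_eqVlt => /orP[/eqP|//].
by move/(pval_inj (leq_trans km (leqW pos_max_le)) (ltnSn n)); have := pos_max_le; lia.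
Qed.

Lemma right_inv_eq0 : right_inv = 0 -> forall k, m < k < n -> v < pval s k.
Proof.
move=> /(@sum_bool_eq0 n (fun k => (m < k) && (pval s k < v))) B0 k /andP[mk kn].
have := B0 k kn; rewrite mk /= -leqNgt leq_eqVlt => /orP[/eqP|//].
by move/(pval_inj (ltnSn n) (leqW kn)); lia.
Qed.

Lemma left_right_inv_last : n <= m -> left_inv = 0 /\ right_inv = 0.
Proof.
move=> nm; split; apply: big1 => k _.
  by rewrite pval_last_max // [n < _]ltnNge pval_le ?andbF // ltnW.
by rewrite pos_max_last // [n < _]ltnNge ltnW.
Qed.

Lemma left_right_inv : left_inv + v = right_inv + m.
Proof.
have [mn|nm] := ltnP m n; last first.
  by have [-> ->] := left_right_inv_last nm; rewrite pval_last_max // pos_max_last.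
have count_lt_v : \sum_(k < n) (pval s k < v : nat) = v.
  have := sum_pval s (fun x => (x < v : nat)).
  by rewrite count_ord_lt big_ord_recr /= ltnn addn0 => ->; apply/minn_idPl/ltnW; rewrite pval_lt.
have split_v : \sum_(k < n) (pval s k < v : nat) =
    \sum_(k < n) ((k < m) && (pval s k < v) : nat) + right_inv.
  rewrite -big_split; apply: eq_bigr => k _ /=.
  case: (ltngtP k m) => [km|km|->] /=; rewrite ?addn0 //.
  by rewrite ltnNge pval_pos_max pval_le.
have split_m : \sum_(k < n) (k < m : nat) =
    \sum_(k < n) ((k < m) && (pval s k < v) : nat) + left_inv.
  rewrite -big_split; apply: eq_bigr => k _ /=.
  case: (k < m) => //=; have := pval_neq_last k.
  by case: (ltngtP (pval s k) v).
have := count_ord_lt n m; rewrite (minn_idPl (ltnW mn)); lia.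
Qed.

Lemma displ_shrink : displ s + absdiff v m = displ shrink + (n - m) + (n - v).
Proof.
have vn := pval_le (leqnn n).
rewrite !displE big_ord_recr /=.
have [mn|nm] := ltnP m n; last first.
  rewrite (eq_bigr (fun k : 'I_n => absdiff (pval shrink k) k)) => [|k _].
    by rewrite pval_last_max // pos_max_last // /absdiff subnn.
  by rewrite pval_shrink_other // neq_ltn (pos_max_last nm) ltn_ord.
have := @sum_update n (fun k : 'I_n => absdiff (pval s k) k)
  (fun k : 'I_n => absdiff (pval shrink k) k) (Ordinal mn).
rewrite /= pval_shrink_pos_max // pval_pos_max addnAC => -> => [|k km]; last first.
  by rewrite pval_shrink_other.
by rewrite /absdiff; lia.
Qed.

Lemma inv_count_shrink :
  inv_count s + left_inv + right_inv + (m != n) =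
  inv_count shrink + (n - m) + (n - v).
Proof.
have count_gt_v : \sum_(k < n) (v < pval s k : nat) = n - v.
  have := sum_pval s (fun x => (v < x : nat)).
  by rewrite count_ord_gt big_ord_recr /= ltnn addn0 => ->.
rewrite !inv_countE inversionsS count_gt_v.
have [mn|nm] := ltnP m n; last first.
  have [-> ->] := left_right_inv_last nm.
  rewrite pval_last_max // pos_max_last // eqxx subnn !addn0.
  by apply: eq_inversions => k kn; rewrite pval_shrink_other // (pos_max_last nm) neq_ltn kn.
have at_shrink : inversions_at n (pval shrink) (Ordinal mn) = left_inv + right_inv.
  rewrite /inversions_at /= pval_shrink_pos_max //.
  congr (_ + _); apply: eq_bigr => k _; case: ltngtP => //= km;
    by rewrite pval_shrink_other // neq_ltn km ?orbT.
have at_s : inversions_at n (pval s) (Ordinal mn) = n - m.+1.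
  rewrite /inversions_at /= pval_pos_max big1 => [|k _]; last first.
    by rewrite [n < _]ltnNge pval_le ?andbF // ltnW.
  rewrite -count_ord_gt add0n; apply: eq_bigr => k _.
  case: ltngtP => //= mk; rewrite pval_neq_pos_max // ?neq_ltn ?mk ?orbT //.
  exact: ltnW.
have := @inversions_update n (pval s) (pval shrink) (Ordinal mn)
  (fun k km => esym (pval_shrink_other (ltn_ord k) km)).
rewrite at_shrink at_s; lia.
Qed.

Lemma defect_shrink :
  inv_count s + tcost s + displ shrink + 2 * minn left_inv right_inv =
  displ s + inv_count shrink + tcost shrink.
Proof.
have := displ_shrink; have := inv_count_shrink; have := left_right_inv.
have := ncycles_shrink; have := ncycles_le s; have := ncycles_le shrink.
have := pval_le (leqnn n); have := pos_max_le.
rewrite /tcost /absdiff; case: (m != n); lia.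
Qed.

Lemma has_3412_lrmax_min_shrink :
  left_inv = 0 \/ right_inv = 0 ->
  has_3412_lrmax_min n.+1 (pval s) -> has_3412_lrmax_min n (pval shrink).
Proof.
move=> AB [r [i [j [t [/andP[ri ij] /andP[jt tn] imax j0 tr]]]]].
have mn := pos_max_le; have fm := pval_pos_max.
have fr : pval s r <= n by apply: pval_le; lia.
have fi : pval s i <= n by apply: pval_le; lia.
have im : i <= m by rewrite leqNgt; apply/negP => /imax; rewrite fm; lia.
have [jm|mj|jm] := ltngtP j m; last by move: j0; rewrite jm fm; lia.
- have tm : t != m by apply/eqP => tm; move: tr; rewrite tm fm; lia.
  have gr : pval shrink r = pval s r by apply: pval_shrink_other; lia.
  have gj : pval shrink j = pval s j by apply: pval_shrink_other; lia.
  have gi : lr_max (pval shrink) i.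
    by move=> k ki; rewrite !pval_shrink_other ?imax //; lia.
  have [tn'|tn'] := eqVneq t n.
    move: tr; rewrite tn' => tr.
    have mn' : m < n.
      rewrite ltn_neqAle mn andbT; apply/eqP => mn'.
      by move: tr; rewrite pval_last_max ?mn' //; lia.
    by exists r, i, j, m; rewrite pval_shrink_pos_max // gr gj; split => //; lia.
  have gt : pval shrink t = pval s t by apply: pval_shrink_other; lia.
  by exists r, i, j, t; rewrite gr gj gt; split => //; lia.
- case: AB => [/left_inv_eq0 A0|/right_inv_eq0 B0]; last first.
    by have := B0 j; rewrite j0; lia.
  have tn' : t != n by apply/eqP => tn'; have := A0 r; move: tr; rewrite tn'; lia.
  have gr : pval shrink r = pval s r by apply: pval_shrink_other; lia.
  have gj : pval shrink j = pval s j by apply: pval_shrink_other; lia.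
  have gt : pval shrink t = pval s t by apply: pval_shrink_other; lia.
  have gi : lr_max (pval shrink) i.
    move=> k ki; rewrite pval_shrink_other; try lia.
    by rewrite pval_shrink; [case: eqP => _; [apply: A0 | apply: imax] | ]; lia.
  by exists r, i, j, t; rewrite gr gj gt; split => //; lia.
Qed.

Lemma has_3412_first_rlmin_shrink :
  left_inv = 0 \/ right_inv = 0 ->
  has_3412_first_rlmin n.+1 (pval s) -> has_3412_first_rlmin n (pval shrink).
Proof.
move=> AB [i [j [q [/andP[i0 ij] /andP[jq qn] /andP[q0 f0i] fjq qmin]]]].
have mn := pos_max_le; have fm := pval_pos_max.
have fi : pval s i <= n by apply: pval_le; lia.
have ne_m k : pval s k < pval s i -> k != m.
  by move=> fk; apply/eqP => km; move: fk; rewrite km fm; lia.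
have m0 : 0 != m by apply: ne_m.
have jm : j != m by apply: ne_m; lia.
have qm : q != m by apply: ne_m; lia.
have g0 : pval shrink 0 = pval s 0 by apply: pval_shrink_other; lia.
have gj : pval shrink j = pval s j by apply: pval_shrink_other; lia.
have [qm'|mq] := ltnP q m.
  have gi : pval shrink i = pval s i by apply: pval_shrink_other; lia.
  have gq : pval shrink q = pval s q by apply: pval_shrink_other; lia.
  exists i, j, q; rewrite gi g0 gj gq; split => //; try lia.
  move=> k /andP[qk kn]; rewrite gq pval_shrink //.
  by case: eqP => _; apply: qmin; lia.
have [qn'|qn'] := eqVneq q n.
  move: q0 fjq; rewrite qn' => q0 fjq.
  case: AB => [/left_inv_eq0 A0|/right_inv_eq0 B0].
    by have := A0 0; lia.
  have jm' : j < m by have := B0 j; lia.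
  have gi : pval shrink i = pval s i by apply: pval_shrink_other; lia.
  exists i, j, m; rewrite pval_shrink_pos_max ?gi ?g0 ?gj; try lia.
  split => //; try lia.
  move=> k /andP[mk kn]; rewrite pval_shrink_pos_max ?pval_shrink_other; try lia.
  by apply: B0; lia.
case: AB => [/left_inv_eq0 A0|/right_inv_eq0 B0]; last first.
  by have := B0 q; have := qmin n; lia.
have gq : pval shrink q = pval s q by apply: pval_shrink_other; lia.
have gi : pval s 0 < pval shrink i.
  by rewrite pval_shrink; [case: eqP => _; [apply: A0 | ] | ]; lia.
exists i, j, q; rewrite g0 gj gq; split => //; try lia.
move=> k /andP[qk kn]; rewrite gq pval_shrink_other; try lia.
by apply: qmin; lia.
Qed.

End Shrink.

Lemma inv_tcost_le_displ n (s : 'S_n) : inv_count s + tcost s <= displ s.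
Proof.
elim: n s => [|n IH] s; first by rewrite /tcost sub0n inv_countE /inversions big_ord0.
by have := defect_shrink s; have := IH (shrink s); lia.
Qed.

Lemma shallow_shrink n (s : 'S_n.+1) :
  shallow s -> shallow (shrink s) /\ (left_inv s = 0 \/ right_inv s = 0).
Proof.
by rewrite /shallow; have := defect_shrink s; have := inv_tcost_le_displ (shrink s); lia.
Qed.

Lemma shallow_avoids_3412_lrmax_min n (s : 'S_n) :
  shallow s -> ~ has_3412_lrmax_min n (pval s).
Proof.
elim: n s => [s _ [r [i [j [t [_ /andP[_ //]]]]]]|n IH s /shallow_shrink [sh AB] P].
exact: IH (shrink s) sh (has_3412_lrmax_min_shrink AB P).
Qed.

Lemma shallow_avoids_3412_first_rlmin n (s : 'S_n) :
  shallow s -> ~ has_3412_first_rlmin n (pval s).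
Proof.
elim: n s => [s _ [i [j [q [_ /andP[_ //]]]]]|n IH s /shallow_shrink [sh AB] P].
exact: IH (shrink s) sh (has_3412_first_rlmin_shrink AB P).
Qed.

Unset Implicit Arguments.

Theorem theorem2p8 (n : nat) (s : 'S_n) :
  shallow s ->
  (~ exists r i j t : 'I_n,
       r < i /\ i < j /\ j < t /\
       (s i : nat) = n.-1 /\ (s j : nat) = 0 /\ s t < s r) /\
  (~ exists f i j l : 'I_n,
       (f : nat) = 0 /\ (l : nat) = n.-1 /\ f < i /\ i < j /\ j < l /\
       s f < s i /\ s l < s f /\ s j < s l).
Proof.
move=> sh; split.
  move=> [r [i [j [t [ri [ij [jt [si [sj tr]]]]]]]]].
  apply: (shallow_avoids_3412_lrmax_min sh); exists r, i, j, t.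
  rewrite !pvalE ri ij jt ltn_ord; split => // k ki.
  have kn := ltn_trans ki (ltn_ord i).
  have := pval_lt s kn; have := @pval_inj _ s k i kn (ltn_ord i).
  by rewrite pvalE si; lia.
move=> [f [i [j [l [f0 [ln [fi [ij [jl [sfi [slf sjl]]]]]]]]]]].
apply: (shallow_avoids_3412_first_rlmin sh); exists i, j, l.
rewrite -f0 !pvalE f0 -f0 fi ij jl ltn_ord slf sfi sjl; split => // k.
by have := ltn_ord l; lia.
Qed.
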